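(* Let $G$ be a finite group. If the difference graph $\mathcal{D}(G)$ is null (has no edges), then the power graph $\mathcal{P}(G)$ is a cograph, i.e. it contains no induced subgraph isomorphic to the path $P_4$ on four vertices.
   Context: For a finite group $G$ with identity $e$: the intersection power graph $\mathcal{G}_I(G)$ has vertex set $G$, two distinct non-identity vertices $x,y$ being adjacent iff $\langle x\rangle\cap\langle y\rangle\neq\{e\}$, and $e$ being adjacent to every other vertex. The power graph $\mathcal{P}(G)$ has vertex set $G$, two distinct vertices being adjacent iff one is a power of the other. The difference graph $\mathcal{D}(G)$ has edge set $E(\mathcal{G}_I(G))\setminus E(\mathcal{P}(G))$ with isolated vertices removed. *)

From mathcomp Require Import all_boot all_fingroup.
Set Implicit Arguments. Unset Strict Implicit. Unset Printing Implicit Defensive.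
Local Open Scope group_scope.

(* A finite group G is represented as the whole carrier of a finGroupType gT. *)

Definition power_adj (gT : finGroupType) (x y : gT) : bool :=
  (x != y) && ((x \in <[y]>) || (y \in <[x]>)).

Definition inter_power_adj (gT : finGroupType) (x y : gT) : bool :=
  (x != y) && [|| x == 1, y == 1 | <[x]> :&: <[y]> != 1].

(* The difference graph D(G) has edge set E(G_I(G)) \ E(P(G)) (isolated
   vertices removed); it is null iff it has no edges. *)
Definition difference_graph_null (gT : finGroupType) : Prop :=
  forall x y : gT, inter_power_adj x y && ~~ power_adj x y = false.

Definition induced_P4 (T : Type) (e : T -> T -> bool) (a b c d : T) : bool :=
  [&& e a b, e b c, e c d, ~~ e a c, ~~ e b d & ~~ e a d].

(* A graph is a cograph iff it contains no induced P4 (vertices of an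
   induced P4 are automatically distinct for an irreflexive relation). *)
Definition P4_free (T : Type) (e : T -> T -> bool) : Prop :=
  forall a b c d : T, ~ induced_P4 e a b c d.

From mathcomp Require Import all_boot all_fingroup.
Set Implicit Arguments. Unset Strict Implicit. Unset Printing Implicit Defensive.
Local Open Scope group_scope.

(* If D(G) is null, two distinct vertices that are not joined in P(G) are
   non-identity elements generating cyclic subgroups with trivial
   intersection.  Hence, for a path x - y - z in P(G) with x, z not adjacent
   and y <> 1, both x and z must be powers of y: otherwise y would be a
   power of both, or one end would be a power of the other.  In an induced
   P4 a - b - c - d this gives a in <b> and b in <c>, so a in <c>, which
   contradicts the non-adjacency of a and c. *)

Lemma mem_cycle_trans (gT : finGroupType) (x y z : gT) :
  x \in <[y]> -> y \in <[z]> -> x \in <[z]>.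
Proof. by move=> xy yz; apply: subsetP xy; rewrite cycle_subG. Qed.

Lemma induced_P4_neq (T : eqType) (e : T -> T -> bool) (a b c d : T) :
  induced_P4 e a b c d -> (a != c) && (b != d).
Proof.
case/and5P=> ab _ cd _ /andP[_ nad].
apply/andP; split; apply/eqP=> eq_v.
- by rewrite eq_v cd in nad.
- by rewrite -eq_v ab in nad.
Qed.

Section NullDifferenceGraph.

Variable gT : finGroupType.
Hypothesis diff_null : difference_graph_null gT.

Lemma nonadj_cycleI1 (x z : gT) :
  x != z -> ~~ power_adj x z -> [/\ x != 1, z != 1 & <[x]> :&: <[z]> = 1].
Proof.
move=> xz nxz; have := diff_null x z.
rewrite nxz andbT /inter_power_adj xz /=.
by case: (x == 1) => //; case: (z == 1) => //= /negbFE/eqP.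
Qed.

Lemma nonadj_neighbors_in_cycle (x y z : gT) :
  y != 1 -> power_adj x y -> power_adj y z -> x != z -> ~~ power_adj x z ->
  (x \in <[y]>) && (z \in <[y]>).
Proof.
move=> y1 /andP[_ xy] /andP[_ yz] xz nxz.
have [_ _ xzI] := nonadj_cycleI1 xz nxz.
move: nxz; rewrite /power_adj xz negb_or /= => /andP[xNz zNx].
case/orP: xy => [xy|yx]; case/orP: yz => [yz|zy].
- by rewrite (mem_cycle_trans xy yz) in xNz.
- by rewrite xy zy.
- have: y \in <[x]> :&: <[z]> by rewrite inE yx yz.
  by rewrite xzI inE (negPf y1).
- by rewrite (mem_cycle_trans zy yx) in zNx.
Qed.

End NullDifferenceGraph.

Theorem proposition2p5 (gT : finGroupType) :
  difference_graph_null gT -> P4_free (@power_adj gT).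
Proof.
move=> diff_null a b c d P4.
case/andP: (induced_P4_neq P4) => ac bd.
case/and5P: P4 => ab bc cd nac /andP[nbd _].
have [_ c1 _] := nonadj_cycleI1 diff_null ac nac.
have [b1 _ _] := nonadj_cycleI1 diff_null bd nbd.
case/andP: (nonadj_neighbors_in_cycle diff_null b1 ab bc ac nac) => a_in_b _.
case/andP: (nonadj_neighbors_in_cycle diff_null c1 bc cd bd nbd) => b_in_c _.
by move: nac; rewrite /power_adj ac (mem_cycle_trans a_in_b b_in_c).
Qed.
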